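(* Under the standing assumptions stated in the context, $\sum_{\sigma\in\mathcal S}\mu_\beta(\sigma)\,h_{\mathcal S_L,\mathcal S^c}(\sigma)=\mu_\beta(\mathcal S)[1+o(1)]$ as $\beta\to\infty$.
   Context: Glauber setting. Fix $J>0$, $h>0$ with $0<h<2J$ and $2J/h\notin\mathbb N$; $\ell_c=\lceil 2J/h\rceil$. $\Lambda_\beta\subset\mathbb Z^2$: square box of odd side length centred at the origin with periodic boundary conditions. State space $\mathcal X_\beta=\{-1,+1\}^{\Lambda_\beta}$. Hamiltonian $H_\beta(\sigma)=-\frac J2\sum_{\{x,y\}}\sigma(x)\sigma(y)-\frac h2\sum_x\sigma(x)$ (unordered nearest-neighbour pairs); Gibbs measure $\mu_\beta=e^{-\beta H_\beta}/Z_\beta$. Glauber dynamics: rates $c_\beta(\sigma,\sigma^x)=e^{-\beta[H_\beta(\sigma^x)-H_\beta(\sigma)]_+}$ ($\sigma^x$: spin at $x$ flipped), other rates $0$. $R_{\ell_1,\ell_2}(x)$: $\ell_1\times\ell_2$ rectangle with lower-left corner $x$ (either orientation). Bootstrap map $C_B(\sigma)$: replace each cluster of $(+1)$-spins by its circumscribed rectangle and iterate (merging rectangles at distance $<2$) until the $(+1)$-spins form rectangles pairwise at distance $\ge2$; subcritical: each such rectangle fits in an $(\ell_c-1)\times\ell_c$ rectangle. $\mathcal S=\{\sigma:C_B(\sigma)\text{ subcritical}\}$. $Q_L(x)$ is the $L$-th element of $R_{1,2}(x),R_{2,2}(x),R_{2,3}(x),R_{3,3}(x),\dots,R_{\ell_c-1,\ell_c}(x)$;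 $\mathcal S_L=\{\sigma\in\mathcal S:\text{each rectangle of }C_B(\sigma)\text{ fits inside some }Q_L(x)\}$; $L$ is a fixed integer with $L\le2\ell_c-3$ such that $\lim_{\beta\to\infty}\mu_\beta(\mathcal S_L)/\mu_\beta(\mathcal S)=1$. For disjoint non-empty $\mathcal A,\mathcal B$, the equilibrium potential is $h_{\mathcal A,\mathcal B}(\sigma)=\mathbb P_\sigma(\tau_{\mathcal A}<\tau_{\mathcal B})$ for $\sigma\notin\mathcal A\cup\mathcal B$, $1$ on $\mathcal A$, $0$ on $\mathcal B$, where $\tau_{\mathcal A}=\inf\{t>0:\sigma_t\in\mathcal A,\sigma_{t^-}\notin\mathcal A\}$. *)

From Stdlib Require Import Reals ClassicalEpsilon.
From mathcomp Require Import all_boot.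
Set Implicit Arguments. Unset Strict Implicit. Unset Printing Implicit Defensive.

Open Scope R_scope.

Definition propb (P : Prop) : bool :=
  if excluded_middle_informative P then true else false.

(* Lattice: discrete torus of side m, sites (i,j) with i,j in 'I_m *)
Notation Site m := ('I_m * 'I_m)%type.
(* configurations: true = spin +1, false = spin -1 *)
Notation config m := {ffun Site m -> bool}.

Definition shift m (i : 'I_m) (k : nat) : 'I_m :=
  Ordinal (ltn_pmod (i + k)%N (leq_ltn_trans (leq0n i) (ltn_ord i))).

Definition nn m (x y : Site m) : bool :=
  (x != y) &&
  [|| y == (shift x.1 1, x.2), y == (shift x.1 m.-1, x.2),
      y == (x.1, shift x.2 1) | y == (x.1, shift x.2 m.-1)].

Definition spin m (s : config m) (x : Site m) : R := if s x then 1 else -1.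

Definition flip m (s : config m) (x : Site m) : config m :=
  [ffun y => if y == x then ~~ s y else s y].

(* H(sigma) = -J/2 sum_{unordered nn pairs} s(x)s(y) - h/2 sum_x s(x);
   the sum over unordered pairs is half the sum over ordered pairs. *)
Definition Ham (J h : R) m (s : config m) : R :=
  - (J / 2) * (/ 2 * \big[Rplus/R0]_(x : Site m)
                        \big[Rplus/R0]_(y : Site m | nn x y) (spin s x * spin s y))
  - (h / 2) * \big[Rplus/R0]_(x : Site m) spin s x.

Definition Zpart (J h beta : R) m : R :=
  \big[Rplus/R0]_(s : config m) exp (- (beta * Ham J h s)).

Definition mu (J h beta : R) m (s : config m) : R :=
  exp (- (beta * Ham J h s)) / Zpart J h beta m.

Definition muSet (J h beta : R) m (A : config m -> Prop) : R :=
  \big[Rplus/R0]_(s : config m | propb (A s)) mu J h beta s.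

Definition rate (J h beta : R) m (s : config m) (x : Site m) : R :=
  exp (- (beta * Rmax 0 (Ham J h (flip s x) - Ham J h s))).

Definition jumpP (J h beta : R) m (s : config m) (x : Site m) : R :=
  rate J h beta s x / \big[Rplus/R0]_(y : Site m) rate J h beta s y.

(* hitk k s = probability, starting from s, that the chain enters A within its
   first k jumps and before visiting B (with the conventions 1 on A, 0 on B) *)
Fixpoint hitk (J h beta : R) m (A B : config m -> Prop) (k : nat) (s : config m)
  : R :=
  if propb (A s) then 1 else if propb (B s) then 0 else
  match k with
  | 0 => 0
  | k'.+1 => \big[Rplus/R0]_(x : Site m)
               (jumpP J h beta s x * hitk J h beta A B k' (flip s x))
  end.

(* equilibrium potential h_{A,B}(s) = P_s(tau_A < tau_B) off A \cup B,
   1 on A, 0 on B; the probability is the (monotone) limit of hitk. *)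
Definition eqpot (J h beta : R) m (A B : config m -> Prop) (s : config m) : R :=
  if propb (A s) then 1 else if propb (B s) then 0 else
  epsilon (inhabits 0) (fun l => Un_cv (fun k => hitk J h beta A B k s) l).

Definition rect m (x : Site m) (l1 l2 : nat) (y : Site m) : Prop :=
  exists a b : nat, (a < l1)%N /\ (b < l2)%N /\ y = (shift x.1 a, shift x.2 b).

Definition is_rectangle m (R : Site m -> Prop) : Prop :=
  exists (x : Site m) (l1 l2 : nat), (0 < l1 <= m)%N /\ (0 < l2 <= m)%N /\
    forall y, R y <-> rect x l1 l2 y.

Definition fits_in m (R : Site m -> Prop) (l1 l2 : nat) : Prop :=
  exists x : Site m, (forall y, R y -> rect x l1 l2 y) \/ (forall y, R y -> rect x l2 l1 y).

(* two sites at (torus Euclidean) distance < 2 *)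
Definition near m (y z : Site m) : Prop :=
  exists a b : nat, a \in [:: 0%N; 1%N; m.-1] /\ b \in [:: 0%N; 1%N; m.-1] /\
    z = (shift y.1 a, shift y.2 b).

Definition component m (Y R : Site m -> Prop) : Prop :=
  is_rectangle R /\ (forall y, R y -> Y y) /\
  (forall y z, R y -> Y z -> ~ R z -> ~ near y z).

Definition stable m (Y : Site m -> Prop) : Prop :=
  forall y, Y y -> exists R, component Y R /\ R y.

(* (+1)-set of C_B(sigma): the smallest stable set containing the (+1)-spins of
   sigma (intersection of all stable supersets), which is the output of the
   iterated circumscribe-and-merge procedure. *)
Definition CB m (s : config m) (y : Site m) : Prop :=
  forall Y : Site m -> Prop, stable Y -> (forall x, s x = true -> Y x) -> Y y.

Definition ellc (J h : R) : nat := Z.to_nat (up (2 * J / h)).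

Definition inS (lc : nat) m (s : config m) : Prop :=
  stable (CB s) /\ forall R, component (CB s) R -> fits_in R lc.-1 lc.

(* dimensions of Q_L: R_{1,2}, R_{2,2}, R_{2,3}, R_{3,3}, ... (L >= 1) *)
Definition Qdim (L : nat) : nat * nat :=
  if odd L then ((L.+1)./2, (L.+1)./2.+1) else (L./2.+1, L./2.+1).

Definition inSL (lc L : nat) m (s : config m) : Prop :=
  inS lc s /\ forall R, component (CB s) R -> fits_in R (Qdim L).1 (Qdim L).2.

(* The equilibrium potential h_{S_L, S^c} takes values in [0, 1] and equals 1
   on S_L, which is contained in S.  Hence the weighted sum is squeezed between
   mu(S_L) and mu(S), and the assumption mu(S_L)/mu(S) -> 1 closes the gap.
   The remaining hypotheses on J, h, the box and L only serve to make that
   assumption true. *)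
From Stdlib Require Import Reals Lra ClassicalEpsilon.
From mathcomp Require Import all_boot.
From HB Require Import structures.
Open Scope R_scope.

HB.instance Definition _ :=
  Monoid.isComLaw.Build R 0 Rplus
    (fun x y z => esym (Rplus_assoc x y z)) Rplus_comm Rplus_0_l.

Lemma propbP (P : Prop) : reflect P (propb P).
Proof. by rewrite /propb; case: excluded_middle_informative => ?; constructor. Qed.

Section RealSums.
Variable I : finType.

Lemma sumR_ge0 (P : pred I) (F : I -> R) :
  (forall i, P i -> 0 <= F i) -> 0 <= \big[Rplus/R0]_(i | P i) F i.
Proof.
by move=> F_ge0; apply: (big_ind (fun x => 0 <= x)) => *; [lra|lra|exact: F_ge0].
Qed.

Lemma sumR_le (P : pred I) (F G : I -> R) :
  (forall i, P i -> F i <= G i) ->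
  \big[Rplus/R0]_(i | P i) F i <= \big[Rplus/R0]_(i | P i) G i.
Proof.
by move=> FG; apply: (big_ind2 (fun x y => x <= y)) => *; [lra|lra|exact: FG].
Qed.

Lemma sumR_divr (P : pred I) (F : I -> R) (c : R) :
  \big[Rplus/R0]_(i | P i) (F i / c) = (\big[Rplus/R0]_(i | P i) F i) / c.
Proof.
apply: (big_rec2 (fun x y => x = y / c)); first by rewrite /Rdiv Rmult_0_l.
by move=> i x y _ ->; rewrite /Rdiv; ring.
Qed.

Lemma sumR_term_gt0 (P : pred I) (F : I -> R) (i : I) :
  P i -> 0 < F i -> (forall j, P j -> 0 <= F j) ->
  0 < \big[Rplus/R0]_(j | P j) F j.
Proof.
move=> Pi Fi_gt0 F_ge0; rewrite (bigD1 i) //=.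
have : 0 <= \big[Rplus/R0]_(j | P j && (j != i)) F j.
  by apply: sumR_ge0 => j /andP[Pj _]; exact: F_ge0.
lra.
Qed.

End RealSums.

Section JumpChain.
Variables (J h beta : R) (m : nat).

Lemma rate_gt0 (s : config m) (x : Site m) : 0 < rate J h beta s x.
Proof. exact: exp_pos. Qed.

Lemma jumpP_ge0 (s : config m) (x : Site m) : 0 <= jumpP J h beta s x.
Proof.
apply: Rlt_le; apply: Rdiv_lt_0_compat; first exact: rate_gt0.
apply: (@sumR_term_gt0 _ _ _ x) => //; first exact: rate_gt0.
by move=> y _; apply: Rlt_le; exact: rate_gt0.
Qed.

Lemma jumpP_sum_le1 (s : config m) :
  \big[Rplus/R0]_(x : Site m) jumpP J h beta s x <= 1.
Proof.
rewrite /jumpP sumR_divr.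
set Z := \big[Rplus/R0]_(x : Site m) rate J h beta s x.
have [->|Z_neq0] := Req_dec Z 0; first by rewrite /Rdiv Rmult_0_l; lra.
by rewrite /Rdiv Rinv_r //; lra.
Qed.

Lemma mu_ge0 (s : config m) : 0 <= mu J h beta s.
Proof.
apply: Rlt_le; apply: Rdiv_lt_0_compat; first exact: exp_pos.
apply: (@sumR_term_gt0 _ _ _ s) => //; first exact: exp_pos.
by move=> t _; apply: Rlt_le; exact: exp_pos.
Qed.

Variables (A B : config m -> Prop).

Lemma hitk_bounds (k : nat) (s : config m) : 0 <= hitk J h beta A B k s <= 1.
Proof.
elim: k s => [|k IHk] s /=; first by case: propbP => _; [|case: propbP]; lra.
case: propbP => _; first lra; case: propbP => _; first lra.
split.
  apply: sumR_ge0 => x _; apply: Rmult_le_pos; first exact: jumpP_ge0.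
  by case: (IHk (flip s x)).
apply: Rle_trans (jumpP_sum_le1 s); apply: sumR_le => x _.
by have := jumpP_ge0 s x; have := IHk (flip s x); nra.
Qed.

Lemma hitk_growing (s : config m) : Un_growing (fun k => hitk J h beta A B k s).
Proof.
move=> k; elim: k s => [|k IHk] s /=; case: propbP => _; try lra;
  case: propbP => _; try lra.
- apply: sumR_ge0 => x _; apply: Rmult_le_pos; first exact: jumpP_ge0.
  by case: (hitk_bounds 0 (flip s x)).
- by apply: sumR_le => x _; apply: Rmult_le_compat_l; [exact: jumpP_ge0|exact: IHk].
Qed.

Lemma hitk_cv (s : config m) :
  exists l, Un_cv (fun k => hitk J h beta A B k s) l /\ 0 <= l <= 1.
Proof.
set u := fun k => hitk J h beta A B k s.
have u_ub : has_ub u by exists 1 => _ [k ->]; case: (hitk_bounds k s).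
have [l u_cv] := growing_cv u (hitk_growing s) u_ub.
exists l; split=> //; split.
  by apply: Rle_trans (growing_ineq u l (hitk_growing s) u_cv 0); case: (hitk_bounds 0 s).
apply: (@Rle_cv_lim u (fun _ => 1) l 1 _ u_cv); first by move=> k; case: (hitk_bounds k s).
by move=> e e_gt0; exists 0%N => k _; rewrite /R_dist Rminus_diag Rabs_R0.
Qed.

Lemma eqpot_bounds (s : config m) : 0 <= eqpot J h beta A B s <= 1.
Proof.
rewrite /eqpot; case: propbP => _; first lra; case: propbP => _; first lra.
have [l [u_cv l_bounds]] := hitk_cv s.
have u_cv_ex : exists l, Un_cv (fun k => hitk J h beta A B k s) l by exists l.
by rewrite (UL_sequence _ _ _ (epsilon_spec (inhabits 0) _ u_cv_ex) u_cv).
Qed.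

Lemma eqpot_in (s : config m) : A s -> eqpot J h beta A B s = 1.
Proof. by rewrite /eqpot; case: propbP. Qed.

Lemma muSet_le_weighted_eqpot (S : config m -> Prop) :
  (forall s, A s -> S s) ->
  muSet J h beta A <=
  \big[Rplus/R0]_(s : config m | propb (S s)) (mu J h beta s * eqpot J h beta A B s).
Proof.
move=> AS; rewrite /muSet big_mkcond [X in _ <= X]big_mkcond /=.
apply: sumR_le => s _; have := mu_ge0 s; have := eqpot_bounds s.
case: propbP => [As|_]; first by rewrite eqpot_in //; case: propbP => [_|/(_ (AS s As))]; lra.
by case: propbP => _; nra.
Qed.

Lemma weighted_eqpot_le_muSet (S : config m -> Prop) :
  \big[Rplus/R0]_(s : config m | propb (S s)) (mu J h beta s * eqpot J h beta A B s)
  <= muSet J h beta S.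
Proof.
by apply: sumR_le => s _; have := mu_ge0 s; have := eqpot_bounds s; nra.
Qed.

End JumpChain.

Lemma squeeze_rel_error (a x b eps : R) :
  0 <= a -> a <= x <= b -> Rabs (a / b - 1) < eps -> Rabs (x - b) <= eps * b.
Proof.
move=> a_ge0 [ax xb] ratio_close; rewrite Rabs_left1; last lra.
have [b_eq0|b_gt0] : b = 0 \/ 0 < b by lra.
  by rewrite b_eq0; lra.
have gap_lt : (b - a) / b < eps.
  apply: Rle_lt_trans (Rle_abs _) _.
  by rewrite -Rabs_Ropp (_ : - ((b - a) / b) = a / b - 1) //; field; lra.
have := Rmult_lt_compat_r b _ _ b_gt0 gap_lt.
rewrite /Rdiv Rmult_assoc Rinv_l; lra.
Qed.

Theorem lemma3p1 (J h : R) (side : R -> nat) (L : nat) :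
  0 < J -> 0 < h -> h < 2 * J -> (forall n : nat, 2 * J / h <> INR n) ->
  (forall beta : R, odd (side beta)) ->
  (1 <= L)%N -> (L <= 2 * ellc J h - 3)%N ->
  (forall eps : R, 0 < eps -> exists b0 : R, forall beta : R, b0 < beta ->
     Rabs (muSet J h beta (inSL (ellc J h) L (m:=side beta))
           / muSet J h beta (inS (ellc J h) (m:=side beta)) - 1) < eps) ->
  forall eps : R, 0 < eps -> exists b0 : R, forall beta : R, b0 < beta ->
    Rabs (\big[Rplus/R0]_(s : config (side beta) | propb (inS (ellc J h) s))
            (mu J h beta s *
             eqpot J h beta (inSL (ellc J h) L (m:=side beta))
                            (fun s' => ~ inS (ellc J h) s') s)
          - muSet J h beta (inS (ellc J h) (m:=side beta)))
    <= eps * muSet J h beta (inS (ellc J h) (m:=side beta)).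
Proof.
move=> _ _ _ _ _ _ _ ratio_cv eps eps_gt0.
have [b0 ratio_close] := ratio_cv eps eps_gt0.
exists b0 => beta beta_gt; apply: squeeze_rel_error (ratio_close beta beta_gt).
- by apply: sumR_ge0 => s _; exact: mu_ge0.
- split; last exact: weighted_eqpot_le_muSet.
  by apply: muSet_le_weighted_eqpot => s [].
Qed.
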